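(* Let $\mathrm{Cir}_9$ be the graph with vertex set $\{1,\dots,9\}$ whose maximal stable sets are exactly $\{1,2,3\},\{4,5,6\},\{7,8,9\},\{1,4,7\},\{3,6,9\}$ (so two distinct vertices are non-adjacent iff they lie together in one of these sets). Then $\mathrm{Cir}_9$ is not co-weakly triangle, i.e., the complement of $\mathrm{Cir}_9$ is not weakly triangle.
   Context: A family $\mathcal S$ of maximal stable sets of $G$ is non-edge covering if every two distinct non-adjacent vertices lie in a common member. A graph $G$ is weakly triangle if there is a non-edge covering family $\mathcal S$ of maximal stable sets of $G$ such that for every $S\in\mathcal S$ and every pair of adjacent vertices $u,v\in V(G)\setminus S$, $u$ and $v$ have a common neighbor in $S$. *)

From mathcomp Require Import all_boot.
Set Implicit Arguments. Unset Strict Implicit. Unset Printing Implicit Defensive.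

Section Graphs.
Variable T : finType.

Definition simple_graph (e : rel T) : Prop :=
  irreflexive e /\ symmetric e.

Definition compl_graph (e : rel T) : rel T := fun x y => (x != y) && ~~ e x y.

Definition stable (e : rel T) (A : {set T}) : bool :=
  [forall x in A, forall y in A, ~~ e x y].

Definition max_stable (e : rel T) (A : {set T}) : bool := maxset (stable e) A.

Definition non_edge_covering (e : rel T) (F : {set {set T}}) : Prop :=
  (forall S, S \in F -> max_stable e S) /\
  (forall u v, u != v -> ~~ e u v -> exists2 S, S \in F & (u \in S) && (v \in S)).

Definition weakly_triangle (e : rel T) : Prop :=
  exists F : {set {set T}},
    non_edge_covering e F /\
    forall S, S \in F -> forall u v, u \notin S -> v \notin S -> e u v ->
      exists2 w, w \in S & e u w && e v w.
End Graphs.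

(* Cir_9 on vertices 'I_9, where vertex k (0-based) stands for k+1.
   Its maximal stable sets: {1,2,3},{4,5,6},{7,8,9},{1,4,7},{3,6,9}. *)
Definition cir9_blocks : seq (seq nat) :=
  [:: [:: 1; 2; 3]; [:: 4; 5; 6]; [:: 7; 8; 9]; [:: 1; 4; 7]; [:: 3; 6; 9]].

Definition cir9 : rel 'I_9 := fun x y =>
  (x != y) && ~~ has (fun b => (x.+1 \in b) && (y.+1 \in b)) cir9_blocks.

(* In the complement of Cir_9 two vertices are adjacent iff they share a
   block. A member S of the family containing the non-adjacent vertices 2
   and 5 is stable, so it avoids their neighbours 1, 3, 4 and 6. The edges
   1-4 and 3-6 lie outside S, and their only common neighbours are 7 and 9
   respectively, so both 7 and 9 lie in S; but 7 and 9 are adjacent. *)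
From Pilot Require Import Defs.
From mathcomp Require Import all_boot.

Set Implicit Arguments.
Unset Strict Implicit.
Unset Printing Implicit Defensive.

Section WeaklyTriangleFamily.
Variables (T : finType) (e : rel T) (F : {set {set T}}).

Lemma stable_adj_notin (S : {set T}) x y :
  stable e S -> x \in S -> e x y -> y \notin S.
Proof.
move=> /forallP /(_ x) /implyP stS xS exy; apply/negP => yS.
by move: (stS xS) => /forallP /(_ y) /implyP /(_ yS); rewrite exy.
Qed.

Hypothesis F_triangle : forall S, S \in F -> forall u v,
  u \notin S -> v \notin S -> e u v -> exists2 w, w \in S & e u w && e v w.

Lemma unique_common_neighbour_mem (S : {set T}) u v z :
  S \in F -> u \notin S -> v \notin S -> e u v ->
  (forall w, e u w -> e v w -> w = z) -> z \in S.
Proof.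
move=> SF uS vS euv uniq_z.
have [w wS /andP[euw evw]] := F_triangle SF uS vS euv.
by rewrite -(uniq_z w euw evw).
Qed.

End WeaklyTriangleFamily.

(* [vtx k] is the vertex labelled [k] in the paper; [Defs] indexes from 0. *)
Notation vtx k := (@Ordinal 9 k.-1 isT).

Lemma compl_cir9_common_neighbour_1_4 w :
  compl_graph cir9 (vtx 1) w -> compl_graph cir9 (vtx 4) w -> w = vtx 7.
Proof.
by case: w => [[|[|[|[|[|[|[|[|[|?]]]]]]]]] ?] //= _ _; exact/val_inj.
Qed.

Lemma compl_cir9_common_neighbour_3_6 w :
  compl_graph cir9 (vtx 3) w -> compl_graph cir9 (vtx 6) w -> w = vtx 9.
Proof.
by case: w => [[|[|[|[|[|[|[|[|[|?]]]]]]]]] ?] //= _ _; exact/val_inj.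
Qed.

Theorem proposition43 : ~ weakly_triangle (compl_graph cir9).
Proof.
move=> [F [[maxF coverF] triF]].
have [S SF /andP[S2 S5]] := coverF (vtx 2) (vtx 5) isT isT.
have stS : stable (compl_graph cir9) S := maxsetp (maxF S SF).
have S1 : vtx 1 \notin S by apply: stable_adj_notin stS S2 _.
have S3 : vtx 3 \notin S by apply: stable_adj_notin stS S2 _.
have S4 : vtx 4 \notin S by apply: stable_adj_notin stS S5 _.
have S6 : vtx 6 \notin S by apply: stable_adj_notin stS S5 _.
have S7 : vtx 7 \in S.
  apply: (unique_common_neighbour_mem triF SF S1 S4) => //.
  exact: compl_cir9_common_neighbour_1_4.
have S9 : vtx 9 \in S.
  apply: (unique_common_neighbour_mem triF SF S3 S6) => //.
  exact: compl_cir9_common_neighbour_3_6.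
suff : vtx 9 \notin S by rewrite S9.
by apply: stable_adj_notin stS S7 _.
Qed.
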